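(* For any unit-cost instance of the Correlated Pandora's Problem (all $c_i=1$) whose volumes are positive even integers, $\mathrm{CP}_{\textsc{Unit}}\le\mathrm{OPT}$, where $\mathrm{CP}_{\textsc{Unit}}$ is the optimal value of the Unit-Cost Convex Program.
   Context: Correlated Pandora's Problem: boxes $[n]$, box $i$ has opening cost $c_i$ (here $c_i=1$) and volume $v_i$; the scenario $v=(v_1,\dots,v_n)$ is drawn from a known, possibly correlated distribution $\mathcal{D}$. Opening a box costs its cost and reveals its volume; an algorithm repeatedly opens another box or stops and takes an opened box of minimum volume; the objective is total opening cost plus taken volume, minimized in expectation. A partially adaptive algorithm fixes the opening order in advance (independent of $v$) and adaptively decides when to stop; $\mathrm{OPT}$ is the minimum expected objective of a partially adaptive algorithm. Write $x_+=\max\{x,0\}$. Unit-Cost Convex Program: variables $x_i(t)\ge 0$ for $i,t\in[n]$ with $\sum_{i\in[n]}x_i(t)\le 1$ for all $t\in[n]$; minimize $\mathbf{E}_{v\sim\mathcal{D}}\sum_{t=1}^\infty\big(1-\sum_{i\in[n]}\sum_{t'\in[n],\,t'<t-v_i}x_i(t')\big)_+$. *)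

From HB Require Import structures.
From mathcomp Require Import all_boot all_order all_algebra all_fingroup.
From mathcomp Require Import all_classical all_reals all_analysis.
Set Implicit Arguments. Unset Strict Implicit. Unset Printing Implicit Defensive.
Import Order.TTheory GRing.Theory Num.Theory.
Local Open Scope ring_scope.
Local Open Scope ereal_scope.

(* Boxes are 'I_n (box i of the paper is i+1).  The distribution D has finite
   support: scenarios indexed by k : 'I_m, scenario k occurs with probability
   p k and has volume vector V k : 'I_n -> nat.  All opening costs are 1. *)

Definition is_distribution (R : realType) (m : nat) (p : 'I_m -> R) : Prop :=
  (forall k, (0 <= p k)%R) /\ (\sum_(k < m) p k)%R = 1%R.

(* x i t stands for x_{i+1}(t+1); the time t' = t+1 of the paper lies in [n]. *)
Definition cp_feasible (R : realType) (n : nat) (x : 'I_n -> 'I_n -> R) : Prop :=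
  (forall i t, (0 <= x i t)%R) /\ (forall t, (\sum_(i < n) x i t <= 1)%R).

(* (1 - sum_i sum_{t' in [n], t' < t - v_i} x_i(t'))_+ ; with t' = t0+1 the
   condition t' < t - v_i reads t0 + 1 + v_i < t (in Z, equivalently in nat). *)
Definition cp_term (R : realType) (n : nat) (x : 'I_n -> 'I_n -> R)
  (v : 'I_n -> nat) (t : nat) : R :=
  Num.max 0%R (1 - \sum_(i < n) \sum_(t0 < n | (t0.+1 + v i < t)%N) x i t0)%R.

Definition cp_scen_obj (R : realType) (n : nat) (x : 'I_n -> 'I_n -> R)
  (v : 'I_n -> nat) : \bar R :=
  \sum_(1 <= t <oo) (cp_term x v t)%:E.

Definition cp_obj (R : realType) (n m : nat) (p : 'I_m -> R)
  (V : 'I_m -> 'I_n -> nat) (x : 'I_n -> 'I_n -> R) : \bar R :=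
  \sum_(k < m) (p k)%:E * cp_scen_obj x (V k).

Definition CP_unit (R : realType) (n m : nat) (p : 'I_m -> R)
  (V : 'I_m -> 'I_n -> nat) : \bar R :=
  ereal_inf [set cp_obj p V x | x in [set x | cp_feasible x]].

(* A partially adaptive algorithm: a fixed opening order sigma (the j-th box
   opened is sigma j) and an adaptive stopping rule [stop], which, given the
   sequence of volumes observed so far (its length is the number of opened
   boxes, >= 1), decides whether to stop.  It must stop after opening all n
   boxes.  On stopping it takes an opened box of minimum volume. *)

Definition observed (n : nat) (sigma : {perm 'I_n}) (v : 'I_n -> nat) (t : nat)
  : seq nat := [seq v (sigma j) | j <- enum 'I_n & (nat_of_ord j < t)%N].

Definition stop_time (n : nat) (sigma : {perm 'I_n}) (stop : seq nat -> bool)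
  (v : 'I_n -> nat) : nat :=
  minn n (find (fun t => stop (observed sigma v t.+1)) (iota 0 n)).+1.

Definition seq_min (s : seq nat) : nat := foldr minn (head 0%N s) s.

Definition alg_cost (n : nat) (sigma : {perm 'I_n}) (stop : seq nat -> bool)
  (v : 'I_n -> nat) : nat :=
  (stop_time sigma stop v + seq_min (observed sigma v (stop_time sigma stop v)))%N.

Definition alg_exp_cost (R : realType) (n m : nat) (p : 'I_m -> R)
  (V : 'I_m -> 'I_n -> nat) (sigma : {perm 'I_n}) (stop : seq nat -> bool) : R :=
  (\sum_(k < m) p k * (alg_cost sigma stop (V k))%:R)%R.

Definition OPT (R : realType) (n m : nat) (p : 'I_m -> R)
  (V : 'I_m -> 'I_n -> nat) : \bar R :=
  ereal_inf [set (alg_exp_cost p V sigma stop)%:E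
            | sigma in [set: {perm 'I_n}] & stop in [set: seq nat -> bool]].

From HB Require Import structures.
From mathcomp Require Import all_boot all_order all_algebra all_fingroup.
From mathcomp Require Import all_classical all_reals all_analysis.
Import Order.TTheory GRing.Theory Num.Theory.
Local Open Scope ring_scope.
Local Open Scope ereal_scope.

(* Fix the opening order sigma of an algorithm and put x_i(t) = 1 exactly when
   sigma opens box i at time t; this is feasible.  In a scenario where the
   algorithm takes the box i opened at time j, it pays at least j + v_i, while
   every term of the program is at most 1 and the terms with t > j + v_i
   vanish.  So the program pays at most the algorithm's cost scenario by
   scenario. *)

Lemma foldr_minn_in (a : nat) (s : seq nat) : foldr minn a s \in a :: s.
Proof.
elim: s => [|y s IHs] /=; first by rewrite mem_seq1.
rewrite /minn; case: ifP => _; first by rewrite !inE eqxx orbT.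
by move: IHs; rewrite !inE => /orP[->|->]; rewrite ?orbT.
Qed.

Lemma seq_min_in (s : seq nat) : s != [::] -> seq_min s \in s.
Proof.
case: s => [|y s] // _; rewrite /seq_min [head _ _]/=.
by have := foldr_minn_in y (y :: s); rewrite inE => /orP[/eqP ->|] //; rewrite mem_head.
Qed.

Section OpeningOrder.
Context {n : nat} (sigma : {perm 'I_n}).

Lemma stop_time_gt0 (stop : seq nat -> bool) (v : 'I_n -> nat) :
  (0 < n)%N -> (0 < stop_time sigma stop v)%N.
Proof. by move=> n_gt0; rewrite /stop_time leq_min n_gt0. Qed.

Lemma seq_min_observed (v : 'I_n -> nat) (t : nat) :
  (0 < n)%N -> (0 < t)%N ->
  exists2 j : 'I_n, (j < t)%N & seq_min (observed sigma v t) = v (sigma j).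
Proof.
move=> n_gt0 t_gt0.
have first_observed : v (sigma (Ordinal n_gt0)) \in observed sigma v t.
  by apply/mapP; exists (Ordinal n_gt0); rewrite // mem_filter t_gt0 mem_enum.
have /seq_min_in/mapP[j] : observed sigma v t != [::].
  by apply/eqP => obs0; rewrite obs0 in first_observed.
by rewrite mem_filter => /andP[j_lt_t _] ->; exists j.
Qed.

Lemma alg_cost_ge_taken_box (stop : seq nat -> bool) (v : 'I_n -> nat) :
  (0 < n)%N -> exists j : 'I_n, (j.+1 + v (sigma j) <= alg_cost sigma stop v)%N.
Proof.
move=> n_gt0; have s_gt0 := stop_time_gt0 stop v n_gt0.
have [j j_lt_s min_j] := seq_min_observed v _ n_gt0 s_gt0.
by exists j; rewrite /alg_cost min_j leq_add2r.
Qed.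

End OpeningOrder.

Section OrderSolution.
Context (R : realType) {n : nat} (sigma : {perm 'I_n}).

Definition cp_of_order : 'I_n -> 'I_n -> R :=
  fun i t => if sigma t == i then 1%R else 0%R.

Lemma cp_of_order_ge0 i t : (0 <= cp_of_order i t)%R.
Proof. by rewrite /cp_of_order; case: ifP. Qed.

Lemma cp_of_order_feasible : cp_feasible cp_of_order.
Proof.
split=> [|t]; first exact: cp_of_order_ge0.
rewrite (bigD1 (sigma t)) //= /cp_of_order eqxx big1 ?addr0 // => i.
by rewrite eq_sym => /negbTE ->.
Qed.

End OrderSolution.

Section ConvexProgramTerms.
Variables (R : realType) (n : nat) (x : 'I_n -> 'I_n -> R) (v : 'I_n -> nat).
Hypothesis x_ge0 : forall i t, (0 <= x i t)%R.

Lemma cp_term_ge0 t : (0 <= cp_term x v t)%R.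
Proof. by rewrite /cp_term le_max lexx. Qed.

Lemma cp_term_le1 t : (cp_term x v t <= 1)%R.
Proof.
rewrite /cp_term ge_max ler01 gerBl.
by apply: sumr_ge0 => i _; apply: sumr_ge0 => t0 _.
Qed.

Lemma cp_term_eq0 t (i t0 : 'I_n) :
  (t0.+1 + v i < t)%N -> (1 <= x i t0)%R -> cp_term x v t = 0%R.
Proof.
move=> t0_early x_ge1; apply/max_idPl; rewrite subr_le0.
rewrite (bigD1 i) //= (bigD1 t0) //= -addrA.
apply: le_trans x_ge1 _; rewrite lerDl addr_ge0 //; first exact: sumr_ge0.
by apply: sumr_ge0 => j _; apply: sumr_ge0.
Qed.

Lemma cp_scen_obj_le (T : nat) :
  (forall t, (T < t)%N -> cp_term x v t = 0%R) -> cp_scen_obj x v <= (T%:R)%:E.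
Proof.
move=> term_eq0; rewrite /cp_scen_obj (nneseries_split 1 T); last first.
  by move=> t _; rewrite lee_fin cp_term_ge0.
rewrite eseries0 ?adde0; last by move=> t t_late _; rewrite term_eq0.
rewrite sumEFin lee_fin.
apply: le_trans (_ : \sum_(1 <= t < 1 + T) 1 <= _)%R.
  by apply: ler_sum => t _; apply: cp_term_le1.
by rewrite sumr_const_nat addKn.
Qed.

End ConvexProgramTerms.

Lemma cp_scen_obj_of_order_le (R : realType) {n : nat} (sigma : {perm 'I_n})
    (stop : seq nat -> bool) (v : 'I_n -> nat) :
  (0 < n)%N ->
  cp_scen_obj (cp_of_order R sigma) v <= ((alg_cost sigma stop v)%:R)%:E.
Proof.
move=> n_gt0; have [j cost_ge] := alg_cost_ge_taken_box sigma stop v n_gt0.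
apply: cp_scen_obj_le => [i t|t cost_lt]; first exact: cp_of_order_ge0.
apply: (@cp_term_eq0 _ _ _ _ (cp_of_order_ge0 R sigma) _ (sigma j) j).
  exact: leq_ltn_trans cost_lt.
by rewrite /cp_of_order eqxx.
Qed.

Theorem lemma3p1 (R : realType) (n m : nat) (n_gt0 : (0 < n)%N)
  (p : 'I_m -> R) (V : 'I_m -> 'I_n -> nat)
  (hp : is_distribution p)
  (hV : forall k i, (0 < V k i)%N /\ ~~ odd (V k i)) :
  CP_unit p V <= OPT p V.
Proof.
apply/ereal_infP => _ [sigma _ [stop _ <-]].
apply: ge_ereal_inf; exists (cp_obj p V (cp_of_order R sigma)).
  by exists (cp_of_order R sigma) => //; apply: cp_of_order_feasible.
rewrite /cp_obj /alg_exp_cost -sumEFin; apply: lee_sum => k _.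
have [p_ge0 _] := hp.
rewrite EFinM; apply: lee_wpmul2l; first by rewrite lee_fin.
exact: cp_scen_obj_of_order_le.
Qed.
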